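(* Let $L\in(\sqrt2\pi,+\infty)$ be fixed. Then for every $\omega\in\mathbb{R}$ the equation $$-\phi''+\omega\phi-\phi\log\phi^2=0$$ possesses an $L$-periodic solution which is even and strictly positive. *)

From Stdlib Require Import Reals.
Open Scope R_scope.

Definition solves_logNLS (omega : R) (phi phi1 phi2 : R -> R) : Prop :=
  forall x : R,
    derivable_pt_lim phi x (phi1 x) /\
    derivable_pt_lim phi1 x (phi2 x) /\
    - phi2 x + omega * phi x - phi x * ln ((phi x) ^ 2) = 0.

Definition L_periodic (L : R) (phi : R -> R) : Prop :=
  forall x : R, phi (x + L) = phi x.

Definition even_fun (phi : R -> R) : Prop :=
  forall x : R, phi (- x) = phi x.

From Stdlib Require Import Reals Ranalysis5 Lra ClassicalEpsilon.
From Coquelicot Require Import Coquelicot.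
Open Scope R_scope.

(* Writing phi = exp (omega / 2) * psi reduces the equation to
   psi'' = - 2 psi ln psi, which conserves the energy psi'^2 + pot psi with
   pot p = 2 p^2 ln p - p^2 + 1.  If pot_sqrt is the signed square root of pot,
   the energy level r^2 is the circle (pot_sqrt psi, psi') = (r sin th, r cos th),
   and the angle th is the inverse of an explicit time map.  This produces even,
   positive solutions of period orbit_period r for 0 <= r < 1.  The period
   depends continuously on r, equals sqrt 2 PI at r = 0 and exceeds
   2 sqrt 2 PI for an orbit that comes close to 0, so for L > sqrt 2 PI it takes
   the value L / n for some n >= 1; that orbit is L-periodic and non-constant. *)

Lemma locally_of_Rabs (x e : R) (P : R -> Prop) : 0 < e ->
  (forall y, Rabs (y - x) < e -> P y) -> locally x P.
Proof. intros He H. exists (mkposreal e He). exact H. Qed.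

Lemma is_derive_continuous (f : R -> R) (x l : R) : is_derive f x l -> continuous f x.
Proof. intros H. apply (ex_derive_continuous (V:=R_NormedModule)). now exists l. Qed.

Lemma is_derive_continuity_pt (f : R -> R) (x l : R) : is_derive f x l -> continuity_pt f x.
Proof. intros H. apply continuity_pt_filterlim, (is_derive_continuous _ _ _ H). Qed.

Lemma continuous_Rabs_iff (f : R -> R) (x : R) : continuous f x <->
  forall eps, 0 < eps -> exists del, 0 < del /\
    forall y, Rabs (y - x) < del -> Rabs (f y - f x) < eps.
Proof.
rewrite <- (continuity_pt_filterlim f x). split.
- intros Hc eps He. destruct (Hc eps He) as [del [Hd H]]. exists del. split; [lra|].
  intros y Hy. destruct (Req_dec y x) as [->|Hne].
  + rewrite Rminus_diag_eq, Rabs_R0; auto.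
  + apply (H y). split; [split; [exact I|auto]|exact Hy].
- intros Hc eps He. destruct (Hc eps He) as [del [Hd H']].
  exists del. split; [lra|]. intros y [_ Hy]. apply H'. exact Hy.
Qed.

Lemma derive_zero_const (F : R -> R) :
  (forall x, is_derive F x 0) -> forall x y, F x = F y.
Proof.
intros H x y. destruct (MVT_gen F x y (fun _ => 0)) as [c [_ Hc]].
- intros z _. apply H.
- intros z _. apply (is_derive_continuity_pt F z 0 (H z)).
- lra.
Qed.

Lemma derive_nonneg_le (F dF : R -> R) (a b : R) : a <= b ->
  (forall x, a <= x <= b -> is_derive F x (dF x)) ->
  (forall x, a <= x <= b -> 0 <= dF x) -> F a <= F b.
Proof.
intros Hab H Hd. destruct (MVT_gen F a b dF) as [c [Hc1 Hc2]].
- intros z Hz. rewrite Rmin_left, Rmax_right in Hz by lra. apply H; lra.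
- intros z Hz. rewrite Rmin_left, Rmax_right in Hz by lra.
  apply (is_derive_continuity_pt F z (dF z)), H; lra.
- rewrite Rmin_left, Rmax_right in Hc1 by lra. pose proof (Hd c Hc1). nra.
Qed.

Lemma ln_ge_1_sub_inv (p : R) : 0 < p -> 1 - / p <= ln p.
Proof.
intros Hp. pose proof (exp_ineq1_le (ln (/ p))) as H.
rewrite exp_ln, ln_Rinv in H by (try apply Rinv_0_lt_compat; lra). lra.
Qed.

Lemma locally_neq (x a : R) : x <> a -> locally x (fun y => y <> a).
Proof.
intros Hxa. apply locally_of_Rabs with (Rabs (x - a)).
- apply Rabs_pos_lt. lra.
- intros y Hy Hya. rewrite Hya, Rabs_minus_sym in Hy. lra.
Qed.

Lemma between_Rabs_le (a y c : R) : Rmin a y <= c <= Rmax a y -> Rabs (c - a) <= Rabs (y - a).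
Proof.
intros Hc. destruct (Rle_dec a y).
- rewrite Rmin_left, Rmax_right in Hc by lra. rewrite !Rabs_right; lra.
- rewrite Rmin_right, Rmax_left in Hc by lra. rewrite !Rabs_left1; lra.
Qed.

(** * Difference quotients *)

Definition slope (f : R -> R) (a l x : R) : R :=
  if Req_EM_T x a then l else (f x - f a) / (x - a).

Lemma slope_spec (f : R -> R) (a l x : R) : f x = f a + (x - a) * slope f a l x.
Proof. unfold slope. destruct (Req_EM_T x a) as [->|Hne]; [ring|field; lra]. Qed.

Lemma slope_continuous_at (f : R -> R) (a l : R) :
  derivable_pt_lim f a l -> continuous (slope f a l) a.
Proof.
intros Hf. apply continuous_Rabs_iff. intros eps He.
destruct (Hf eps He) as [del Hdel]. exists del. split; [apply cond_pos|].
intros y Hy. unfold slope. destruct (Req_EM_T a a) as [_|]; [|lra].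
destruct (Req_EM_T y a) as [->|Hne].
- rewrite Rminus_diag_eq, Rabs_R0; auto.
- specialize (Hdel (y - a) ltac:(lra) Hy). now replace (a + (y - a)) with y in Hdel by ring.
Qed.

Lemma slope_continuous (f : R -> R) (a l x : R) :
  x <> a -> continuous f x -> continuous (slope f a l) x.
Proof.
intros Hxa Hf. apply continuous_ext_loc with (fun y => (f y - f a) / (y - a)).
- generalize (locally_neq x a Hxa). apply filter_imp. intros y Hy.
  unfold slope. now destruct (Req_EM_T y a).
- apply continuity_pt_filterlim. apply continuity_pt_div.
  + apply continuity_pt_minus; [now apply continuity_pt_filterlim|].
    apply continuity_pt_const. now intros.
  + apply continuity_pt_minus; [apply derivable_continuous_pt, derivable_pt_id|].
    apply continuity_pt_const. now intros.
  + lra.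
Qed.

Definition slope2 (h : R -> R) (a c x : R) : R :=
  if Req_EM_T x a then c else h x / (x - a) ^ 2.

Lemma slope2_spec (h : R -> R) (a c x : R) : h a = 0 -> h x = (x - a) ^ 2 * slope2 h a c x.
Proof.
intros Ha. unfold slope2. destruct (Req_EM_T x a) as [->|Hne].
- rewrite Ha. ring.
- field. lra.
Qed.

Lemma slope2_continuous (h : R -> R) (a c x : R) :
  x <> a -> continuous h x -> continuous (slope2 h a c) x.
Proof.
intros Hxa Hh. apply continuous_ext_loc with (fun y => h y / (y - a) ^ 2).
- generalize (locally_neq x a Hxa). apply filter_imp. intros y Hy.
  unfold slope2. now destruct (Req_EM_T y a).
- apply continuity_pt_filterlim. apply continuity_pt_div.
  + now apply continuity_pt_filterlim.
  + apply derivable_continuous_pt. reg.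
  + apply pow_nonzero. lra.
Qed.

(* A second-order l'Hospital rule, by the mean value theorem for
   [h x - k a / 2 * (x - a) ^ 2]. *)
Lemma slope2_continuous_at (h k : R -> R) (a d : R) : 0 < d -> h a = 0 ->
  (forall x, Rabs (x - a) < d -> is_derive h x ((x - a) * k x)) ->
  continuous k a -> continuous (slope2 h a (k a / 2)) a.
Proof.
intros Hd Ha Hh Hk. apply continuous_Rabs_iff. intros eps He.
destruct (proj1 (continuous_Rabs_iff k a) Hk eps He) as [del [Hdel Hkdel]].
exists (Rmin del d). split; [now apply Rmin_pos|]. intros y Hy.
pose proof (Rmin_l del d) as Hmin1. pose proof (Rmin_r del d) as Hmin2.
unfold slope2. destruct (Req_EM_T a a) as [_|]; [|lra].
destruct (Req_EM_T y a) as [->|Hne]; [rewrite Rminus_diag_eq, Rabs_R0; auto|].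
set (H x := h x - k a / 2 * (x - a) ^ 2).
assert (HH : forall x, Rabs (x - a) < d -> is_derive H x ((x - a) * (k x - k a))).
{ intros x Hx. unfold H.
  replace ((x - a) * (k x - k a)) with ((x - a) * k x - k a * (x - a)) by ring.
  apply (is_derive_minus h); [now apply Hh|]. auto_derive; auto. field. }
destruct (MVT_gen H a y (fun x => (x - a) * (k x - k a))) as [c [Hc Hmvt]].
- intros x Hx. apply HH. pose proof (between_Rabs_le a y x ltac:(lra)). lra.
- intros x Hx. pose proof (between_Rabs_le a y x Hx).
  apply (is_derive_continuity_pt _ _ _ (HH x ltac:(lra))).
- pose proof (between_Rabs_le a y c Hc) as Hca.
  assert (Hq : h y / (y - a) ^ 2 - k a / 2 = (c - a) / (y - a) * (k c - k a)).
  { unfold H in Hmvt. rewrite Ha in Hmvt.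
    apply (Rmult_eq_reg_r ((y - a) ^ 2)); [|apply pow_nonzero; lra].
    field_simplify; [|lra|lra]. nra. }
  rewrite Hq, Rabs_mult. unfold Rdiv. rewrite Rabs_mult, Rabs_inv.
  assert (Hya : 0 < Rabs (y - a)) by (apply Rabs_pos_lt; lra).
  assert (Hle : Rabs (c - a) * / Rabs (y - a) <= 1).
  { apply (Rmult_le_reg_r (Rabs (y - a))); [lra|].
    rewrite Rmult_assoc, Rinv_l; lra. }
  specialize (Hkdel c ltac:(lra)). pose proof (Rabs_pos (k c - k a)).
  pose proof (Rabs_pos (c - a)). pose proof (Rinv_0_lt_compat _ Hya). nra.
Qed.

(** * The potential and its signed square root *)

Definition ln_slope : R -> R := slope ln 1 1.

Lemma ln_eq_slope (p : R) : ln p = (p - 1) * ln_slope p.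
Proof. unfold ln_slope. rewrite (slope_spec ln 1 1 p) at 1. rewrite ln_1. ring. Qed.

Lemma ln_slope_1 : ln_slope 1 = 1.
Proof. unfold ln_slope, slope. now destruct (Req_EM_T 1 1). Qed.

Lemma ln_slope_pos (p : R) : 0 < p -> 0 < ln_slope p.
Proof.
intros Hp. destruct (Rtotal_order p 1) as [Hlt|[->|Hgt]].
- assert (ln p < 0) by (rewrite <- ln_1; apply ln_increasing; lra).
  rewrite ln_eq_slope in H. nra.
- rewrite ln_slope_1. lra.
- assert (0 < ln p) by (rewrite <- ln_1; apply ln_increasing; lra).
  rewrite ln_eq_slope in H. nra.
Qed.

Lemma ln_slope_continuous (p : R) : 0 < p -> continuous ln_slope p.
Proof.
intros Hp. destruct (Req_dec p 1) as [->|Hne].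
- apply slope_continuous_at. replace 1 with (/ 1) at 2 by field. apply derivable_pt_lim_ln. lra.
- apply slope_continuous; auto. apply continuity_pt_filterlim, derivable_continuous_pt.
  exists (/ p). now apply derivable_pt_lim_ln.
Qed.

Definition pot (p : R) : R := 2 * p ^ 2 * ln p - p ^ 2 + 1.

Lemma pot_1 : pot 1 = 0.
Proof. unfold pot. rewrite ln_1. ring. Qed.

Lemma pot_ge_sq (p : R) : 0 < p -> (p - 1) ^ 2 <= pot p.
Proof.
intros Hp. pose proof (ln_ge_1_sub_inv p Hp). unfold pot.
assert (2 * p ^ 2 * (1 - / p) <= 2 * p ^ 2 * ln p) by (apply Rmult_le_compat_l; nra).
replace (2 * p ^ 2 * (1 - / p)) with (2 * p ^ 2 - 2 * p) in H0 by (field; lra). nra.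
Qed.

Lemma is_derive_pot (x : R) : 0 < x -> is_derive pot x (4 * x * ln x).
Proof. intros Hx. unfold pot. auto_derive; [lra|]. field. lra. Qed.

Definition pot_slope2 : R -> R := slope2 pot 1 2.

Lemma pot_eq_slope2 (p : R) : pot p = (p - 1) ^ 2 * pot_slope2 p.
Proof. apply slope2_spec, pot_1. Qed.

Lemma pot_slope2_1 : pot_slope2 1 = 2.
Proof. unfold pot_slope2, slope2. now destruct (Req_EM_T 1 1). Qed.

Lemma pot_slope2_ge_1 (p : R) : 0 < p -> 1 <= pot_slope2 p.
Proof.
intros Hp. destruct (Req_dec p 1) as [->|Hne]; [rewrite pot_slope2_1; lra|].
pose proof (pot_ge_sq p Hp). rewrite pot_eq_slope2 in H.
assert (0 < (p - 1) ^ 2) by (apply pow2_gt_0; lra).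
nra.
Qed.

Lemma pot_slope2_continuous (p : R) : 0 < p -> continuous pot_slope2 p.
Proof.
intros Hp. destruct (Req_dec p 1) as [->|Hne].
- set (k x := 4 * x * ln_slope x).
  replace pot_slope2 with (slope2 pot 1 (k 1 / 2))
    by (unfold k, pot_slope2; rewrite ln_slope_1; do 2 f_equal; field).
  apply (slope2_continuous_at pot k 1 1); [lra|apply pot_1| |].
  + intros x Hx. apply Rabs_def2 in Hx. unfold k.
    replace ((x - 1) * (4 * x * ln_slope x)) with (4 * x * ln x) by (rewrite ln_eq_slope; ring).
    apply is_derive_pot. lra.
  + apply (continuous_mult (fun x => 4 * x) ln_slope).
    * apply (is_derive_continuous _ _ 4). auto_derive; auto. ring.
    * apply ln_slope_continuous. lra.
- apply slope2_continuous; auto. apply (is_derive_continuous _ _ _ (is_derive_pot p Hp)).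
Qed.

(* [pot_sqrt p = sign (p - 1) * sqrt (pot p)]: in the variable [pot_sqrt psi]
   the energy levels [psi'^2 + pot psi = r^2] become circles. *)
Definition pot_sqrt (p : R) : R := (p - 1) * sqrt (pot_slope2 p).

Definition dpot_sqrt (p : R) : R := 2 * p * ln_slope p / sqrt (pot_slope2 p).

Lemma sqrt_pot_slope2_pos (p : R) : 0 < p -> 0 < sqrt (pot_slope2 p).
Proof. intros Hp. apply sqrt_lt_R0. pose proof (pot_slope2_ge_1 p Hp). lra. Qed.

Lemma pot_sqrt_sq (p : R) : 0 < p -> pot_sqrt p ^ 2 = pot p.
Proof.
intros Hp. unfold pot_sqrt. rewrite pot_eq_slope2, Rpow_mult_distr.
rewrite <- Rsqr_pow2 with (x := sqrt _), Rsqr_sqrt; [ring|].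
pose proof (pot_slope2_ge_1 p Hp). lra.
Qed.

Lemma pot_sqrt_mul_dpot_sqrt (p : R) : 0 < p -> pot_sqrt p * dpot_sqrt p = 2 * p * ln p.
Proof.
intros Hp. unfold pot_sqrt, dpot_sqrt. rewrite ln_eq_slope. field.
pose proof (sqrt_pot_slope2_pos p Hp). lra.
Qed.

Lemma pot_sqrt_1 : pot_sqrt 1 = 0.
Proof. unfold pot_sqrt. ring. Qed.

Lemma dpot_sqrt_1 : dpot_sqrt 1 = sqrt 2.
Proof.
unfold dpot_sqrt. rewrite ln_slope_1, pot_slope2_1.
pose proof (sqrt_sqrt 2 ltac:(lra)). pose proof Rlt_sqrt2_0.
apply (Rmult_eq_reg_r (sqrt 2)); [|lra]. field_simplify; lra.
Qed.

Lemma pot_sqrt_pos (p : R) : 1 < p -> 0 < pot_sqrt p.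
Proof. intros H. unfold pot_sqrt. pose proof (sqrt_pot_slope2_pos p ltac:(lra)). nra. Qed.

Lemma pot_sqrt_neg (p : R) : 0 < p -> p < 1 -> pot_sqrt p < 0.
Proof. intros H H'. unfold pot_sqrt. pose proof (sqrt_pot_slope2_pos p H). nra. Qed.

Lemma dpot_sqrt_pos (p : R) : 0 < p -> 0 < dpot_sqrt p.
Proof.
intros Hp. unfold dpot_sqrt. apply Rdiv_lt_0_compat; [|now apply sqrt_pot_slope2_pos].
pose proof (ln_slope_pos p Hp). nra.
Qed.

Lemma dpot_sqrt_continuous (p : R) : 0 < p -> continuous dpot_sqrt p.
Proof.
intros Hp. unfold dpot_sqrt, Rdiv.
apply (continuous_mult (fun p => 2 * p * ln_slope p) (fun p => / sqrt (pot_slope2 p))).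
- apply (continuous_mult (fun p => 2 * p) ln_slope).
  + apply (is_derive_continuous _ _ 2). auto_derive; auto. ring.
  + now apply ln_slope_continuous.
- apply continuous_Rinv_comp.
  + apply continuous_sqrt_comp. now apply pot_slope2_continuous.
  + pose proof (sqrt_pot_slope2_pos p Hp). lra.
Qed.

Lemma is_derive_pot_sqrt_1 : is_derive pot_sqrt 1 (dpot_sqrt 1).
Proof.
apply is_derive_Reals. intros eps He.
assert (Hc : continuous (fun x => sqrt (pot_slope2 x)) 1)
  by (apply continuous_sqrt_comp, pot_slope2_continuous; lra).
destruct (proj1 (continuous_Rabs_iff _ 1) Hc eps He) as [del [Hd H]].
exists (mkposreal del Hd). intros h Hh0 Hh. simpl in Hh.
rewrite pot_sqrt_1, dpot_sqrt_1, <- pot_slope2_1. unfold pot_sqrt.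
replace (((1 + h - 1) * sqrt (pot_slope2 (1 + h)) - 0) / h) with (sqrt (pot_slope2 (1 + h)))
  by (field; auto).
apply H. now replace (1 + h - 1) with h by ring.
Qed.

(* Away from [p = 1] the derivative exists by the explicit formula, and its
   value is forced by differentiating [pot_sqrt ^ 2 = pot]. *)
Lemma is_derive_pot_sqrt (p : R) : 0 < p -> is_derive pot_sqrt p (dpot_sqrt p).
Proof.
intros Hp. destruct (Req_dec p 1) as [->|Hne]; [apply is_derive_pot_sqrt_1|].
assert (Hsq : (p - 1) ^ 2 <> 0) by (apply pow_nonzero; lra).
assert (Hloc : locally p (fun y => (y - 1) * sqrt (pot y / (y - 1) ^ 2) = pot_sqrt y)).
{ generalize (locally_neq p 1 Hne). apply filter_imp. intros y Hy.
  unfold pot_sqrt, pot_slope2, slope2. now destruct (Req_EM_T y 1). }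
assert (Hex : ex_derive (fun y => (y - 1) * sqrt (pot y / (y - 1) ^ 2)) p).
{ pose proof (pot_slope2_ge_1 p Hp) as HK.
  unfold pot_slope2, slope2 in HK. destruct (Req_EM_T p 1); [lra|].
  replace ((p - 1) ^ 2) with ((p + - (1)) * ((p + - (1)) * 1)) in * by ring.
  auto_derive. repeat split; auto; [exists (4 * p * ln p); now apply is_derive_pot|lra]. }
destruct Hex as [d Hd].
assert (HdU : is_derive pot_sqrt p d) by exact (is_derive_ext_loc _ _ _ _ Hloc Hd).
assert (Hsq' : is_derive (fun y => pot_sqrt y ^ 2) p (INR 2 * d * pot_sqrt p ^ 1))
  by (apply (is_derive_pow pot_sqrt 2 p d HdU)).
assert (Hpot : is_derive (fun y => pot_sqrt y ^ 2) p (4 * p * ln p)).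
{ apply (is_derive_ext_loc pot); [|now apply is_derive_pot].
  apply locally_of_Rabs with p; [lra|]. intros y Hy. apply Rabs_def2 in Hy.
  symmetry. apply pot_sqrt_sq. lra. }
assert (HU : pot_sqrt p <> 0).
{ unfold pot_sqrt. pose proof (sqrt_pot_slope2_pos p Hp). intros H0.
  apply Rmult_integral in H0. lra. }
replace (dpot_sqrt p) with d; [exact HdU|].
apply (Rmult_eq_reg_l (pot_sqrt p)); auto. rewrite pot_sqrt_mul_dpot_sqrt by lra.
pose proof (is_derive_unique _ _ _ Hsq') as E1. rewrite (is_derive_unique _ _ _ Hpot) in E1.
simpl in E1. lra.
Qed.

Lemma pot_sqrt_increasing (x y : R) : 0 < x -> x < y -> pot_sqrt x < pot_sqrt y.
Proof.
intros Hx Hxy. apply (incr_function pot_sqrt 0 p_infty dpot_sqrt); simpl; auto; try lra.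
- intros z Hz _. now apply is_derive_pot_sqrt.
- intros z Hz _. now apply dpot_sqrt_pos.
Qed.

Lemma pot_sqrt_inj (x y : R) : 0 < x -> 0 < y -> pot_sqrt x = pot_sqrt y -> x = y.
Proof.
intros Hx Hy H. destruct (Rtotal_order x y) as [Hl|[He|Hl]]; auto.
- pose proof (pot_sqrt_increasing x y Hx Hl). lra.
- pose proof (pot_sqrt_increasing y x Hy Hl). lra.
Qed.

(** * Inverting the signed square root *)

(* The interval [p_lo, p_hi] only has to be wide enough for the amplitudes
   [|r| <= amp_long] used below. *)
Definition p_lo : R := exp (-31).
Definition p_hi : R := exp 1.

Lemma p_lo_pos : 0 < p_lo.
Proof. apply exp_pos. Qed.

Lemma p_lo_lt_1 : p_lo < 1.
Proof. rewrite <- exp_0. apply exp_increasing. lra. Qed.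

Lemma p_hi_gt_1 : 1 < p_hi.
Proof. rewrite <- exp_0. apply exp_increasing. lra. Qed.

Lemma pot_sqrt_p_hi_gt_1 : 1 < pot_sqrt p_hi.
Proof.
pose proof p_hi_gt_1. pose proof (pot_sqrt_sq p_hi ltac:(lra)). pose proof (pot_sqrt_pos p_hi H).
unfold pot, p_hi in H0. rewrite ln_exp in H0. fold p_hi in H0. nra.
Qed.

Lemma pot_sqrt_p_lo_gt_m1 : -1 < pot_sqrt p_lo.
Proof.
pose proof (pot_sqrt_sq p_lo p_lo_pos). pose proof (pot_sqrt_neg p_lo p_lo_pos p_lo_lt_1).
pose proof p_lo_pos. unfold pot, p_lo in H. rewrite ln_exp in H. fold p_lo in H. nra.
Qed.

Definition in_range (u : R) : Prop := pot_sqrt p_lo < u < pot_sqrt p_hi.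

Definition pot_sqrt_inv (u : R) : R :=
  epsilon (inhabits 1) (fun p => p_lo <= p <= p_hi /\ pot_sqrt p = u).

Definition dpot_sqrt_inv (u : R) : R := / dpot_sqrt (pot_sqrt_inv u).

Lemma pot_sqrt_inv_spec (u : R) : pot_sqrt p_lo <= u <= pot_sqrt p_hi ->
  p_lo <= pot_sqrt_inv u <= p_hi /\ pot_sqrt (pot_sqrt_inv u) = u.
Proof.
intros Hu. unfold pot_sqrt_inv. apply epsilon_spec.
destruct (f_interv_is_interv pot_sqrt p_lo p_hi u) as [p Hp]; [|exact Hu| |now exists p].
- pose proof p_lo_lt_1. pose proof p_hi_gt_1. lra.
- intros x Hx. pose proof p_lo_pos.
  apply (is_derive_continuity_pt _ _ _ (is_derive_pot_sqrt x ltac:(lra))).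
Qed.

Lemma pot_sqrt_inv_pot_sqrt (p : R) : p_lo <= p <= p_hi -> pot_sqrt_inv (pot_sqrt p) = p.
Proof.
intros Hp. pose proof p_lo_pos.
assert (Hmono : forall x y, p_lo <= x -> x <= y -> pot_sqrt x <= pot_sqrt y).
{ intros x y Hx Hxy. destruct (Req_dec x y) as [->|Hne]; [lra|].
  left. apply pot_sqrt_increasing; lra. }
destruct (pot_sqrt_inv_spec (pot_sqrt p)) as [Hr He].
- split; apply Hmono; lra.
- apply pot_sqrt_inj; auto; lra.
Qed.

Lemma pot_sqrt_inv_0 : pot_sqrt_inv 0 = 1.
Proof.
rewrite <- pot_sqrt_1. apply pot_sqrt_inv_pot_sqrt.
pose proof p_lo_lt_1. pose proof p_hi_gt_1. lra.
Qed.

Lemma pot_sqrt_inv_in_range (u : R) : in_range u ->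
  p_lo <= pot_sqrt_inv u <= p_hi /\ pot_sqrt (pot_sqrt_inv u) = u.
Proof. intros Hu. apply pot_sqrt_inv_spec. unfold in_range in Hu. lra. Qed.

Lemma pot_sqrt_inv_pos (u : R) : in_range u -> 0 < pot_sqrt_inv u.
Proof. intros Hu. pose proof (pot_sqrt_inv_in_range u Hu). pose proof p_lo_pos. lra. Qed.

Lemma pot_pot_sqrt_inv (u : R) : in_range u -> pot (pot_sqrt_inv u) = u ^ 2.
Proof.
intros Hu. rewrite <- pot_sqrt_sq by now apply pot_sqrt_inv_pos.
now rewrite (proj2 (pot_sqrt_inv_in_range u Hu)).
Qed.

Lemma pot_sqrt_inv_le_1 (u : R) : in_range u -> u <= 0 -> pot_sqrt_inv u <= 1.
Proof.
intros Hu Hu0. destruct (Rle_dec (pot_sqrt_inv u) 1) as [|Hn]; auto.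
pose proof (pot_sqrt_increasing 1 (pot_sqrt_inv u) Rlt_0_1 ltac:(lra)).
rewrite pot_sqrt_1, (proj2 (pot_sqrt_inv_in_range u Hu)) in H. lra.
Qed.

Lemma pot_sqrt_inv_continuous (u : R) : in_range u -> continuous pot_sqrt_inv u.
Proof.
intros Hu. pose proof p_lo_pos. pose proof p_lo_lt_1. pose proof p_hi_gt_1.
apply continuity_pt_filterlim.
apply (continuity_pt_recip_interv pot_sqrt pot_sqrt_inv p_lo p_hi); [lra| | | | |exact Hu].
- intros x y Hx Hxy _. apply pot_sqrt_increasing; lra.
- intros x Hx1 Hx2. unfold comp, id. apply pot_sqrt_inv_spec. lra.
- intros x Hx1 Hx2. apply pot_sqrt_inv_spec. lra.
- intros x Hx. apply (is_derive_continuity_pt _ _ _ (is_derive_pot_sqrt x ltac:(lra))).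
Qed.

Lemma dpot_sqrt_inv_pos (u : R) : in_range u -> 0 < dpot_sqrt_inv u.
Proof. intros Hu. apply Rinv_0_lt_compat, dpot_sqrt_pos, pot_sqrt_inv_pos, Hu. Qed.

Lemma dpot_sqrt_inv_continuous (u : R) : in_range u -> continuous dpot_sqrt_inv u.
Proof.
intros Hu. unfold dpot_sqrt_inv. pose proof (pot_sqrt_inv_pos u Hu).
apply continuous_Rinv_comp.
- apply (continuous_comp pot_sqrt_inv dpot_sqrt).
  + now apply pot_sqrt_inv_continuous.
  + now apply dpot_sqrt_continuous.
- pose proof (dpot_sqrt_pos _ H). lra.
Qed.

Lemma is_derive_pot_sqrt_inv (u : R) : in_range u -> is_derive pot_sqrt_inv u (dpot_sqrt_inv u).
Proof.
intros Hu. pose proof p_lo_pos.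
assert (Hi : pot_sqrt_inv (pot_sqrt p_lo) <= pot_sqrt_inv u <= pot_sqrt_inv (pot_sqrt p_hi)).
{ pose proof p_lo_lt_1. pose proof p_hi_gt_1.
  rewrite !pot_sqrt_inv_pot_sqrt by lra. apply pot_sqrt_inv_in_range, Hu. }
assert (Hder : forall p, pot_sqrt_inv (pot_sqrt p_lo) <= p -> derivable_pt pot_sqrt p).
{ intros p Hp. rewrite pot_sqrt_inv_pot_sqrt in Hp
    by (pose proof p_lo_lt_1; pose proof p_hi_gt_1; lra).
  exists (dpot_sqrt p). apply is_derive_Reals, is_derive_pot_sqrt. lra. }
pose proof (dpot_sqrt_pos _ (pot_sqrt_inv_pos u Hu)) as HD.
apply is_derive_Reals.
replace (dpot_sqrt_inv u) with (1 / derive_pt pot_sqrt (pot_sqrt_inv u) (Hder _ (proj1 Hi))).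
- apply (derivable_pt_lim_recip_interv pot_sqrt pot_sqrt_inv (pot_sqrt p_lo) (pot_sqrt p_hi) u
    (fun a Ha => Hder a (proj1 Ha))); auto.
  + apply continuity_pt_filterlim, pot_sqrt_inv_continuous, Hu.
  + destruct Hu. lra.
  + intros x Hx. unfold comp, id. apply pot_sqrt_inv_spec. lra.
  + rewrite (derive_pt_eq_0 _ _ (dpot_sqrt (pot_sqrt_inv u))); [lra|].
    apply is_derive_Reals, is_derive_pot_sqrt, pot_sqrt_inv_pos, Hu.
- rewrite (derive_pt_eq_0 _ _ (dpot_sqrt (pot_sqrt_inv u))).
  + unfold dpot_sqrt_inv. field. lra.
  + apply is_derive_Reals, is_derive_pot_sqrt, pot_sqrt_inv_pos, Hu.
Qed.

Lemma dpot_sqrt_inv_0 : dpot_sqrt_inv 0 = / sqrt 2.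
Proof. unfold dpot_sqrt_inv. now rewrite pot_sqrt_inv_0, dpot_sqrt_1. Qed.

Lemma div_dpot_sqrt_inv (u : R) : in_range u ->
  u / dpot_sqrt_inv u = 2 * pot_sqrt_inv u * ln (pot_sqrt_inv u).
Proof.
intros Hu. unfold dpot_sqrt_inv, Rdiv. rewrite Rinv_inv.
rewrite <- pot_sqrt_mul_dpot_sqrt by now apply pot_sqrt_inv_pos.
now rewrite (proj2 (pot_sqrt_inv_in_range u Hu)).
Qed.

Lemma pot_sqrt_inv_inj (u v : R) : in_range u -> in_range v ->
  pot_sqrt_inv u = pot_sqrt_inv v -> u = v.
Proof.
intros Hu Hv Huv. rewrite <- (proj2 (pot_sqrt_inv_in_range u Hu)), Huv.
apply pot_sqrt_inv_in_range, Hv.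
Qed.

(** * The time map of a rotation *)

Record time_density (f : R -> R) : Prop := {
  density_continuous : forall t, continuous f t;
  density_pos : forall t, 0 < f t;
  density_periodic : forall t, f (t + 2 * PI) = f t;
  density_sym : forall t, f (PI - t) = f t }.

Section Time.

Variable f : R -> R.
Hypothesis Hf : time_density f.

(* [time th] is the time at which a trajectory travelling with angular speed
   [1 / f] reaches the angle [th], starting from [PI / 2] at time [0]. *)
Definition time (th : R) : R := RInt f (PI / 2) th.

Definition period : R := time (PI / 2 + 2 * PI).

Lemma ex_RInt_density (a b : R) : ex_RInt f a b.
Proof.
apply (ex_RInt_continuous (V:=R_CompleteNormedModule)).
intros t _. apply (density_continuous f Hf).
Qed.

Lemma is_derive_time (th : R) : is_derive time th (f th).
Proof.
apply (is_derive_RInt f time (PI / 2) th).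
- apply filter_forall. intros b. apply (RInt_correct (V:=R_CompleteNormedModule)), ex_RInt_density.
- apply (density_continuous f Hf).
Qed.

Lemma time_PI2 : time (PI / 2) = 0.
Proof. unfold time. now rewrite RInt_point. Qed.

Lemma time_periodic (th : R) : time (th + 2 * PI) = time th + period.
Proof.
assert (H : forall x, is_derive (fun th => time (th + 2 * PI) - time th) x 0).
{ intros x. replace 0 with (1 * f (x + 2 * PI) - f x)
    by (rewrite (density_periodic f Hf); ring).
  apply (is_derive_minus (fun th => time (th + 2 * PI)) time); [|apply is_derive_time].
  apply (is_derive_comp time (fun th => th + 2 * PI)); [apply is_derive_time|].
  auto_derive; auto. }
pose proof (derive_zero_const _ H th (PI / 2)). cbv beta in H0. rewrite time_PI2 in H0.
unfold period. lra.
Qed.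

Lemma time_sym (th : R) : time (PI - th) = - time th.
Proof.
assert (H : forall x, is_derive (fun th => time (PI - th) + time th) x 0).
{ intros x. replace 0 with ((-1) * f (PI - x) + f x)
    by (rewrite (density_sym f Hf); ring).
  apply (is_derive_plus (fun th => time (PI - th)) time); [|apply is_derive_time].
  apply (is_derive_comp time (fun th => PI - th)); [apply is_derive_time|].
  auto_derive; auto. }
pose proof (derive_zero_const _ H th (PI / 2)). cbv beta in H0.
replace (PI - PI / 2) with (PI / 2) in H0 by field. rewrite time_PI2 in H0. lra.
Qed.

Lemma time_increasing (x y : R) : x < y -> time x < time y.
Proof.
intros Hxy. apply (incr_function time m_infty p_infty f); simpl; auto.
- intros z _ _. apply is_derive_time.
- intros z _ _. apply (density_pos f Hf).
Qed.

Lemma period_pos : 0 < period.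
Proof. unfold period. rewrite <- time_PI2. apply time_increasing. pose proof PI_RGT_0. lra. Qed.

Lemma time_turns (n : nat) : time (PI / 2 + 2 * PI * INR n) = INR n * period.
Proof.
induction n as [|n IH].
- simpl. rewrite Rmult_0_r, Rplus_0_r, time_PI2. ring.
- rewrite S_INR. replace (PI / 2 + 2 * PI * (INR n + 1)) with ((PI / 2 + 2 * PI * INR n) + 2 * PI)
    by ring.
  rewrite time_periodic, IH. ring.
Qed.

Lemma time_surj (x : R) : exists th, time th = x.
Proof.
pose proof period_pos. pose proof PI_RGT_0.
destruct (INR_unbounded (Rabs x / period)) as [n Hn].
assert (Hx : Rabs x < INR n * period).
{ apply (Rmult_lt_compat_r period) in Hn; auto. unfold Rdiv in Hn.
  now rewrite Rmult_assoc, Rinv_l, Rmult_1_r in Hn by lra. }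
assert (Hlo : time (PI / 2 - 2 * PI * INR n) = - (INR n * period)).
{ rewrite <- time_turns, <- time_sym. f_equal. field. }
pose proof (pos_INR n). pose proof (Rle_abs x). pose proof (Rle_abs (- x)). rewrite Rabs_Ropp in *.
destruct (f_interv_is_interv time (PI / 2 - 2 * PI * INR n) (PI / 2 + 2 * PI * INR n) x)
  as [th [_ Hth]]; [nra|rewrite Hlo, time_turns; lra| |now exists th].
intros t _. apply (is_derive_continuity_pt _ _ _ (is_derive_time t)).
Qed.

Definition phase (x : R) : R := epsilon (inhabits 0) (fun th => time th = x).

Lemma time_phase (x : R) : time (phase x) = x.
Proof. unfold phase. apply epsilon_spec, time_surj. Qed.

Lemma phase_time (th : R) : phase (time th) = th.
Proof.
set (x := phase (time th)). pose proof (time_phase (time th)). fold x in H.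
destruct (Rtotal_order x th) as [Hl|[He|Hl]]; auto.
- pose proof (time_increasing _ _ Hl). lra.
- pose proof (time_increasing _ _ Hl). lra.
Qed.

Lemma phase_le (x y : R) : x <= y -> phase x <= phase y.
Proof.
intros Hxy. destruct (Rle_dec (phase x) (phase y)) as [|Hn]; auto.
pose proof (time_increasing (phase y) (phase x) ltac:(lra)). rewrite !time_phase in H. lra.
Qed.

Lemma phase_periodic (x : R) : phase (x + period) = phase x + 2 * PI.
Proof. rewrite <- (time_phase x) at 1. now rewrite <- time_periodic, phase_time. Qed.

Lemma phase_opp (x : R) : phase (- x) = PI - phase x.
Proof. rewrite <- (time_phase x) at 1. now rewrite <- time_sym, phase_time. Qed.

Lemma phase_0 : phase 0 = PI / 2.
Proof. rewrite <- time_PI2. apply phase_time. Qed.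

Lemma is_derive_phase (x : R) : is_derive phase x (/ f (phase x)).
Proof.
assert (Hi : phase (x - 1) <= phase x <= phase (x + 1)) by (split; apply phase_le; lra).
assert (Hc : continuity_pt phase x).
{ apply (continuity_pt_recip_interv time phase (phase x - 1) (phase x + 1)); [lra| | | | |].
  - intros a b _ Hab _. now apply time_increasing.
  - intros y _ _. apply time_phase.
  - intros y H1 H2. apply phase_le in H1. apply phase_le in H2. rewrite !phase_time in H1, H2. lra.
  - intros a _. apply (is_derive_continuity_pt _ _ _ (is_derive_time a)).
  - rewrite <- (time_phase x) at 2 3. split; apply time_increasing; lra. }
pose proof (density_pos f Hf (phase x)).
apply is_derive_Reals.
replace (/ f (phase x)) with (1 / f (phase x)) by (field; lra).
pose proof (derivable_pt_lim_recip_interv time phase (x - 1) (x + 1) x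
  (fun p _ => exist _ (f p) (proj1 (is_derive_Reals _ _ _) (is_derive_time p)))
  Hc ltac:(lra) ltac:(lra) Hi (fun y _ => time_phase y)) as Hd.
simpl in Hd. apply Hd. lra.
Qed.

End Time.

(** * Periodic solutions *)

Definition amp_max : R := - pot_sqrt p_lo.

Lemma amp_max_lt_1 : amp_max < 1.
Proof. pose proof pot_sqrt_p_lo_gt_m1. unfold amp_max. lra. Qed.

Lemma Rabs_mul_sin_le (r t : R) : Rabs (r * sin t) <= Rabs r.
Proof.
rewrite Rabs_mult. pose proof (Rabs_pos r).
assert (Rabs (sin t) <= 1) by (apply Rabs_le, SIN_bound). nra.
Qed.

Lemma in_range_of_Rabs (u : R) : Rabs u < amp_max -> in_range u.
Proof.
intros Hu. apply Rabs_def2 in Hu. pose proof amp_max_lt_1. pose proof pot_sqrt_p_hi_gt_1.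
unfold in_range, amp_max in *. lra.
Qed.

Lemma in_range_mul_sin (r t : R) : Rabs r < amp_max -> in_range (r * sin t).
Proof. intros Hr. apply in_range_of_Rabs. pose proof (Rabs_mul_sin_le r t). lra. Qed.

Definition orbit_density (r t : R) : R := dpot_sqrt_inv (r * sin t).

Lemma time_density_orbit (r : R) : Rabs r < amp_max -> time_density (orbit_density r).
Proof.
intros Hr. unfold orbit_density. split.
- intros t. apply (continuous_comp (fun t => r * sin t) dpot_sqrt_inv).
  + apply (is_derive_continuous _ _ (r * cos t)). auto_derive; auto. ring.
  + now apply dpot_sqrt_inv_continuous, in_range_mul_sin.
- intros t. now apply dpot_sqrt_inv_pos, in_range_mul_sin.
- intros t. now rewrite sin_plus, sin_2PI, cos_2PI, Rmult_1_r, Rmult_0_r, Rplus_0_r.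
- intros t. now rewrite sin_PI_x.
Qed.

Section Solution.

Variables r omega : R.
Hypothesis Hr : Rabs r < amp_max.

(* With [u := r sin th], [psi := pot_sqrt_inv u] and [th' = 1 / orbit_density r th]
   one gets [psi' = r cos th] and [psi'' = - u / dpot_sqrt_inv u = - 2 psi ln psi].
   The factor [exp (omega / 2)] absorbs [omega] since
   [ln ((exp (omega / 2) psi)^2) = omega + ln (psi^2)]. *)
Definition sol (x : R) : R :=
  exp (omega / 2) * pot_sqrt_inv (r * sin (phase (orbit_density r) x)).

Definition dsol (x : R) : R := exp (omega / 2) * (r * cos (phase (orbit_density r) x)).

Definition d2sol (x : R) : R :=
  - (exp (omega / 2) * (2 * pot_sqrt_inv (r * sin (phase (orbit_density r) x))
       * ln (pot_sqrt_inv (r * sin (phase (orbit_density r) x))))).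

Let Hf := time_density_orbit r Hr.

Lemma is_derive_sol (x : R) : is_derive sol x (dsol x).
Proof.
unfold sol, dsol. set (th := phase (orbit_density r) x).
pose proof (dpot_sqrt_inv_pos _ (in_range_mul_sin r th Hr)).
apply (is_derive_scal (fun x => pot_sqrt_inv (r * sin (phase (orbit_density r) x)))).
replace (r * cos th) with (/ orbit_density r th * (r * cos th) * dpot_sqrt_inv (r * sin th))
  by (unfold orbit_density; field; lra).
apply (is_derive_comp pot_sqrt_inv (fun x => r * sin (phase (orbit_density r) x))).
- now apply is_derive_pot_sqrt_inv, in_range_mul_sin.
- apply (is_derive_comp (fun t => r * sin t) (phase (orbit_density r))).
  + auto_derive; auto. unfold th. ring.
  + now apply is_derive_phase.
Qed.

Lemma is_derive_dsol (x : R) : is_derive dsol x (d2sol x).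
Proof.
unfold dsol, d2sol. set (th := phase (orbit_density r) x). rewrite Ropp_mult_distr_r.
apply (is_derive_scal (fun x => r * cos (phase (orbit_density r) x))).
rewrite <- div_dpot_sqrt_inv by now apply in_range_mul_sin.
replace (- (r * sin th / dpot_sqrt_inv (r * sin th)))
  with (/ orbit_density r th * (r * - sin th)) by (unfold orbit_density; field;
    pose proof (dpot_sqrt_inv_pos _ (in_range_mul_sin r th Hr)); lra).
apply (is_derive_comp (fun t => r * cos t) (phase (orbit_density r))).
- auto_derive; auto. unfold th. ring.
- now apply is_derive_phase.
Qed.

Lemma sol_pos (x : R) : 0 < sol x.
Proof.
apply Rmult_lt_0_compat; [apply exp_pos|].
now apply pot_sqrt_inv_pos, in_range_mul_sin.
Qed.

Lemma sol_equation (x : R) : - d2sol x + omega * sol x - sol x * ln (sol x ^ 2) = 0.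
Proof.
unfold d2sol, sol. set (p := pot_sqrt_inv _).
assert (Hp : 0 < p) by now apply pot_sqrt_inv_pos, in_range_mul_sin.
replace ((exp (omega / 2) * p) ^ 2) with (exp omega * (p * p))
  by (replace omega with (omega / 2 + omega / 2) at 1 by field; rewrite exp_plus; ring).
rewrite ln_mult, ln_exp, ln_mult by (apply exp_pos || nra). ring.
Qed.

Lemma sol_solves : solves_logNLS omega sol dsol d2sol.
Proof.
intros x. split; [|split].
- apply is_derive_Reals, is_derive_sol.
- apply is_derive_Reals, is_derive_dsol.
- apply sol_equation.
Qed.

Lemma sol_periodic (x : R) : sol (x + period (orbit_density r)) = sol x.
Proof.
unfold sol. rewrite phase_periodic by exact Hf.
now rewrite sin_plus, sin_2PI, cos_2PI, Rmult_1_r, Rmult_0_r, Rplus_0_r.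
Qed.

Lemma sol_turns (n : nat) (x : R) : sol (x + INR n * period (orbit_density r)) = sol x.
Proof.
induction n as [|n IH]; [simpl; now rewrite Rmult_0_l, Rplus_0_r|].
rewrite S_INR, Rmult_plus_distr_r, Rmult_1_l, <- Rplus_assoc.
now rewrite sol_periodic.
Qed.

Lemma sol_even (x : R) : sol (- x) = sol x.
Proof. unfold sol. rewrite phase_opp by exact Hf. now rewrite sin_PI_x. Qed.

Lemma sol_extremes : sol 0 = exp (omega / 2) * pot_sqrt_inv r /\
  sol (time (orbit_density r) (3 * (PI / 2))) = exp (omega / 2) * pot_sqrt_inv (- r).
Proof.
unfold sol. rewrite phase_0, phase_time by exact Hf. split.
- now rewrite sin_PI2, Rmult_1_r.
- replace (3 * (PI / 2)) with (PI / 2 + PI) by field.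
  now rewrite neg_sin, sin_PI2, <- Ropp_mult_distr_r, Rmult_1_r.
Qed.

End Solution.

(** * The period function *)

Definition orbit_period (r : R) : R := period (orbit_density r).

Lemma orbit_period_0 : orbit_period 0 = sqrt 2 * PI.
Proof.
unfold orbit_period, period, time, orbit_density.
rewrite (RInt_ext (V:=R_CompleteNormedModule) _ (fun _ => / sqrt 2))
  by (intros x _; now rewrite Rmult_0_l, dpot_sqrt_inv_0).
rewrite (RInt_const (V:=R_CompleteNormedModule)).
change (scal ?a ?b) with (a * b).
pose proof (sqrt_sqrt 2 ltac:(lra)). pose proof Rlt_sqrt2_0.
apply (Rmult_eq_reg_r (sqrt 2)); [|lra]. field_simplify; [rewrite <- Rsqr_pow2, Rsqr_sqrt|]; lra.
Qed.

Lemma orbit_period_continuous (r : R) : Rabs r < amp_max -> continuity_pt orbit_period r.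
Proof.
intros Hr. apply continuity_pt_filterlim, continuous_Rabs_iff. intros eps He.
set (m := (Rabs r + amp_max) / 2).
pose proof (Rabs_pos r). pose proof PI_RGT_0.
assert (Hm : Rabs r < m < amp_max) by (unfold m; lra).
assert (Hunif : uniform_continuity dpot_sqrt_inv (fun u => - m <= u <= m)).
{ apply Heine; [apply compact_P3|]. intros u Hu.
  apply continuity_pt_filterlim, dpot_sqrt_inv_continuous, in_range_of_Rabs.
  apply Rabs_le in Hu. lra. }
destruct (Hunif (mkposreal (eps / (4 * PI)) ltac:(apply Rdiv_lt_0_compat; lra))) as [del Hdel].
simpl in Hdel.
exists (Rmin del (m - Rabs r)). split; [apply Rmin_pos; [apply cond_pos|lra]|].
intros r' Hr'. pose proof (Rmin_l del (m - Rabs r)). pose proof (Rmin_r del (m - Rabs r)).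
assert (Hr'm : Rabs r' < m) by (pose proof (Rabs_triang_inv r' r); lra).
assert (Hfr : time_density (orbit_density r)) by now apply time_density_orbit.
assert (Hfr' : time_density (orbit_density r')) by (apply time_density_orbit; lra).
unfold orbit_period, period, time.
rewrite <- (RInt_minus (V:=R_CompleteNormedModule)) by now apply ex_RInt_density.
eapply Rle_lt_trans; [apply abs_RInt_le_const with (M := eps / (4 * PI)); [lra| |]|].
- apply (ex_RInt_continuous (V:=R_CompleteNormedModule)). intros t _.
  apply (continuous_minus (orbit_density r') (orbit_density r)); now apply density_continuous.
- intros t _. change (minus ?a ?b) with (a - b). unfold orbit_density.
  left. apply Hdel; try (apply Rabs_le_between; pose proof (Rabs_mul_sin_le r t);
    pose proof (Rabs_mul_sin_le r' t); lra).
  replace (r' * sin t - r * sin t) with ((r' - r) * sin t) by ring.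
  pose proof (Rabs_mul_sin_le (r' - r) t). lra.
- replace (PI / 2 + 2 * PI - PI / 2) with (2 * PI) by ring.
  apply (Rmult_lt_reg_r (4 * PI)); [lra|]. field_simplify; nra.
Qed.

Definition log_gauge (p : R) : R := sqrt (1 - 2 * ln p).

Lemma is_derive_log_gauge (p : R) : 0 < p -> p <= 1 ->
  is_derive log_gauge p (- / (p * log_gauge p)).
Proof.
intros Hp Hp1. assert (ln p <= 0) by (rewrite <- ln_1; now apply ln_le).
assert (0 < log_gauge p) by (apply sqrt_lt_R0; lra).
unfold log_gauge in *. auto_derive; [repeat split; lra|].
replace (1 + - (2 * ln p)) with (1 - 2 * ln p) by ring. field. lra.
Qed.

Section LongPeriod.

Variable r : R.
Hypotheses (Hr0 : 0 <= r) (Hr : r < amp_max).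

Let Hr_abs : Rabs r < amp_max.
Proof. rewrite Rabs_right; lra. Qed.

Let psi (t : R) : R := pot_sqrt_inv (r * sin t).

Let psi_pos (t : R) : 0 < psi t.
Proof. now apply pot_sqrt_inv_pos, in_range_mul_sin. Qed.

Lemma orbit_le_1 (t : R) : PI <= t <= 2 * PI -> psi t <= 1.
Proof.
intros Ht. apply pot_sqrt_inv_le_1; [now apply in_range_mul_sin|].
pose proof (sin_le_0 t (proj1 Ht) (proj2 Ht)). nra.
Qed.

Definition dlog_gauge_orbit (t : R) : R :=
  r * cos t * dpot_sqrt_inv (r * sin t) * - / (psi t * log_gauge (psi t)).

Lemma is_derive_log_gauge_orbit (t : R) : PI <= t <= 2 * PI ->
  is_derive (fun t => log_gauge (psi t)) t (dlog_gauge_orbit t).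
Proof.
intros Ht. apply (is_derive_comp log_gauge psi).
- apply is_derive_log_gauge; [apply psi_pos|now apply orbit_le_1].
- apply (is_derive_comp pot_sqrt_inv (fun t => r * sin t)).
  + now apply is_derive_pot_sqrt_inv, in_range_mul_sin.
  + auto_derive; auto. ring.
Qed.

(* Along the orbit [psi'^2 = r^2 - pot psi <= psi^2 (1 - 2 ln psi)] since [r <= 1],
   i.e. [log_gauge psi] is 1-Lipschitz in time. *)
Lemma Rabs_dlog_gauge_orbit_le (t : R) : PI <= t <= 2 * PI ->
  Rabs (dlog_gauge_orbit t) <= orbit_density r t.
Proof.
intros Ht. unfold dlog_gauge_orbit.
pose proof (psi_pos t) as Hp. pose proof (orbit_le_1 t Ht) as Hp1.
assert (Hln : ln (psi t) <= 0) by (rewrite <- ln_1; now apply ln_le).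
set (B := psi t * log_gauge (psi t)).
assert (HB : 0 < B) by (apply Rmult_lt_0_compat; [lra|apply sqrt_lt_R0; lra]).
assert (HB2 : B ^ 2 = 1 - (r * sin t) ^ 2).
{ unfold B, log_gauge. rewrite Rpow_mult_distr, <- Rsqr_pow2 with (x := sqrt _), Rsqr_sqrt by lra.
  rewrite <- (pot_pot_sqrt_inv _ (in_range_mul_sin r t Hr_abs)). fold (psi t). unfold pot. ring. }
assert (Hc : Rabs (r * cos t) <= B).
{ rewrite <- (Rabs_right B) by lra. apply Rsqr_le_abs_0. unfold Rsqr.
  pose proof (sin2_cos2 t). unfold Rsqr in H. pose proof amp_max_lt_1. nra. }
unfold orbit_density. pose proof (dpot_sqrt_inv_pos _ (in_range_mul_sin r t Hr_abs)).
rewrite !Rabs_mult, Rabs_Ropp, Rabs_inv, (Rabs_right (dpot_sqrt_inv _)), (Rabs_right B) by lra.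
rewrite <- Rabs_mult. fold B.
apply (Rmult_le_reg_r B); auto. rewrite !Rmult_assoc, Rinv_l, Rmult_1_r by lra. nra.
Qed.

Lemma log_gauge_gap_le_time (a b : R) : PI <= a -> a <= b -> b <= 2 * PI ->
  Rabs (log_gauge (psi b) - log_gauge (psi a))
  <= time (orbit_density r) b - time (orbit_density r) a.
Proof.
intros Ha Hab Hb. pose proof (time_density_orbit r Hr_abs) as Hf.
assert (Hmono : forall s : R, s = 1 \/ s = -1 ->
  time (orbit_density r) a + s * log_gauge (psi a)
  <= time (orbit_density r) b + s * log_gauge (psi b)).
{ intros s Hs.
  apply (derive_nonneg_le (fun t => time (orbit_density r) t + s * log_gauge (psi t))
    (fun t => orbit_density r t + s * dlog_gauge_orbit t)); auto.
  - intros x Hx. apply (is_derive_plus (time (orbit_density r))); [now apply is_derive_time|].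
    apply (is_derive_scal (fun t => log_gauge (psi t))), is_derive_log_gauge_orbit. lra.
  - intros x Hx. pose proof (Rabs_dlog_gauge_orbit_le x ltac:(lra)) as Hd.
    apply Rabs_le_between in Hd.
    destruct Hs as [-> | ->]; lra. }
pose proof (Hmono 1 (or_introl eq_refl)). pose proof (Hmono (-1) (or_intror eq_refl)).
apply Rabs_le_between. lra.
Qed.

End LongPeriod.

Definition p_deep : R := exp (-30).
Definition amp_long : R := - pot_sqrt p_deep.

Lemma p_deep_between : p_lo < p_deep < 1.
Proof. split; [|rewrite <- exp_0]; apply exp_increasing; lra. Qed.

Lemma amp_long_between : 0 < amp_long < amp_max.
Proof.
pose proof p_deep_between. pose proof p_lo_pos.
pose proof (pot_sqrt_neg p_deep ltac:(lra) ltac:(lra)).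
pose proof (pot_sqrt_increasing p_lo p_deep ltac:(lra) ltac:(lra)).
unfold amp_long, amp_max. lra.
Qed.

Lemma log_gauge_orbit_at (t : R) : sin t = 0 ->
  log_gauge (pot_sqrt_inv (amp_long * sin t)) = 1.
Proof.
intros ->. rewrite Rmult_0_r, pot_sqrt_inv_0. unfold log_gauge. rewrite ln_1.
replace (1 - 2 * 0) with 1 by ring. apply sqrt_1.
Qed.

Lemma log_gauge_orbit_3PI2 : log_gauge (pot_sqrt_inv (amp_long * sin (3 * (PI / 2)))) = sqrt 61.
Proof.
replace (3 * (PI / 2)) with (PI / 2 + PI) by field. rewrite neg_sin, sin_PI2.
replace (amp_long * - (1)) with (pot_sqrt p_deep) by (unfold amp_long; ring).
pose proof p_deep_between. pose proof p_hi_gt_1.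
rewrite pot_sqrt_inv_pot_sqrt by lra. unfold log_gauge, p_deep. rewrite ln_exp. f_equal. ring.
Qed.

(* The orbit of amplitude [amp_long] dips down to [p_deep]; going down and back up
   takes time at least [2 (sqrt 61 - 1) > 2 sqrt 2 PI]. *)
Lemma orbit_period_amp_long : 2 * sqrt 2 * PI <= orbit_period amp_long.
Proof.
pose proof amp_long_between as [H0 H1]. pose proof PI_RGT_0.
assert (Hf : time_density (orbit_density amp_long))
  by (apply time_density_orbit; rewrite Rabs_right; lra).
pose proof (log_gauge_gap_le_time amp_long ltac:(lra) H1
  PI (3 * (PI / 2)) ltac:(lra) ltac:(lra) ltac:(lra)) as Hdown.
pose proof (log_gauge_gap_le_time amp_long ltac:(lra) H1
  (3 * (PI / 2)) (2 * PI) ltac:(lra) ltac:(lra) ltac:(lra)) as Hup.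
cbv beta in Hdown, Hup.
rewrite log_gauge_orbit_3PI2, log_gauge_orbit_at in Hdown, Hup by (apply sin_PI || apply sin_2PI).
assert (7 < sqrt 61) by (rewrite <- (sqrt_square 7) by lra; apply sqrt_lt_1; lra).
rewrite Rabs_minus_sym in Hup. rewrite Rabs_right in Hdown, Hup by lra.
pose proof (time_increasing _ Hf (PI / 2) PI ltac:(lra)).
pose proof (time_increasing _ Hf (2 * PI) (PI / 2 + 2 * PI) ltac:(lra)).
rewrite time_PI2 in *. unfold orbit_period, period.
assert (sqrt 2 < 3 / 2) by (rewrite <- (sqrt_square (3 / 2)) by lra; apply sqrt_lt_1; lra).
pose proof PI_4. pose proof Rlt_sqrt2_0. nra.
Qed.

Lemma exists_period_divisor (s L : R) : 0 < s -> s < L ->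
  exists n : nat, (0 < n)%nat /\ s < L / INR n <= 2 * s.
Proof.
intros Hs HL.
assert (Hstep : forall N, L <= INR (S N) * s -> exists n, INR n * s < L <= INR (S n) * s).
{ induction N as [|N IH]; intros HN.
  - simpl in HN. lra.
  - destruct (Rle_dec L (INR (S N) * s)) as [Hle|Hgt]; [now apply IH|].
    exists (S N). split; [lra|exact HN]. }
destruct (INR_unbounded (L / s)) as [N HN].
destruct (Hstep N) as [n [Hn1 Hn2]].
{ rewrite S_INR. apply (Rmult_lt_compat_r s) in HN; auto. unfold Rdiv in HN.
  rewrite Rmult_assoc, Rinv_l, Rmult_1_r in HN by lra. lra. }
rewrite S_INR in Hn2.
assert (Hn : 1 <= INR n).
{ destruct n as [|n]; [simpl in Hn2; lra|]. rewrite S_INR. pose proof (pos_INR n). lra. }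
exists n. split; [apply INR_lt; simpl; lra|].
assert (Hdiv : L / INR n * INR n = L) by (field; lra).
split; [apply (Rmult_lt_reg_r (INR n))|apply (Rmult_le_reg_r (INR n))]; rewrite ?Hdiv; nra.
Qed.

Theorem proposition4p1 (L : R) (hL : sqrt 2 * PI < L) (omega : R) :
  exists phi phi1 phi2 : R -> R,
    solves_logNLS omega phi phi1 phi2 /\
    L_periodic L phi /\
    even_fun phi /\
    (forall x : R, 0 < phi x) /\
    (exists x y : R, phi x <> phi y).
Proof.
assert (Hs : 0 < sqrt 2 * PI) by (apply Rmult_lt_0_compat; [apply Rlt_sqrt2_0|apply PI_RGT_0]).
destruct (exists_period_divisor _ L Hs hL) as [n [Hn [Htau1 Htau2]]].
pose proof amp_long_between as [Hl0 Hl1].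
destruct (f_interv_is_interv orbit_period 0 amp_long (L / INR n)) as [r [Hr Hper]]; [lra| |..].
{ rewrite orbit_period_0. pose proof orbit_period_amp_long. lra. }
{ intros x Hx. apply orbit_period_continuous. rewrite Rabs_right; lra. }
assert (Hra : Rabs r < amp_max) by (rewrite Rabs_right; lra).
assert (Hr0 : r <> 0) by (intros ->; rewrite orbit_period_0 in Hper; lra).
exists (sol r omega), (dsol r omega), (d2sol r omega).
split; [now apply sol_solves|]. split; [|split; [|split]].
- intros x. replace L with (INR n * orbit_period r); [now apply sol_turns|].
  rewrite Hper. field. apply not_0_INR, Nat.neq_0_lt_0, Hn.
- intros x. now apply sol_even.
- intros x. now apply sol_pos.
- destruct (sol_extremes r omega Hra) as [E0 E1].
  exists 0, (time (orbit_density r) (3 * (PI / 2))). rewrite E0, E1. intros Heq.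
  apply Rmult_eq_reg_l in Heq; [|apply Rgt_not_eq, exp_pos].
  apply pot_sqrt_inv_inj in Heq; try apply in_range_of_Rabs; rewrite ?Rabs_Ropp; lra.
Qed.
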